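(* Let $q > p+1$ and let $(a_0,\dots,a_q)$ and $(b_0,\dots,b_p)$ be appropriate sequences. Let $u, v$ be non-negative integers with $u < v$ and $u + v \leq q - p$. Then $$\sum_{0 \leq i \leq p} a_{i+u} b_i \leq \sum_{0 \leq i \leq p} a_{i+v} b_i.$$
   Context: A real sequence $(c_0,c_1,\dots,c_m)$ is called appropriate if $c_i = c_{m-i}$ for $0 \le i < m/2$ and $0 \leq c_0 \leq c_1 \leq \dots \leq c_{\lfloor m/2\rfloor}$. *)

From mathcomp Require Import all_boot all_order all_algebra.
Set Implicit Arguments. Unset Strict Implicit. Unset Printing Implicit Defensive.
Import Order.TTheory GRing.Theory Num.Theory.
Local Open Scope ring_scope.

(* A real sequence (c_0,...,c_m) is represented by c : nat -> R, only indices
   0..m being relevant. *)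
Definition appropriate (R : realFieldType) (m : nat) (c : nat -> R) : Prop :=
  (forall i : nat, (i.*2 < m)%N -> c i = c (m - i)%N) /\
  0 <= c 0%N /\
  (forall i : nat, (i < m./2)%N -> c i <= c i.+1).

From mathcomp Require Import all_boot all_order all_algebra.
From mathcomp Require Import zify ring.
Set Implicit Arguments. Unset Strict Implicit. Unset Printing Implicit Defensive.
Import Order.TTheory GRing.Theory Num.Theory.
Local Open Scope ring_scope.

(* Let S s = \sum_i a_(i+s) b_i.  Reversing the summation and using the
   symmetry of a and b gives S s = S (q - p - s), so it suffices that S is
   nondecreasing while 2s < q - p.  The increment S (s+1) - S s is
   \sum_i (a_(i+s+1) - a_(i+s)) b_i.  Splitting b_i = b_0 + (b_i - b_0), the
   constant part telescopes to b_0 (a_(p+1+s) - a_s) >= 0, while b_i - b_0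
   vanishes at both ends and restricts on 1..p-1 to an appropriate sequence
   of length p - 2, so induction on p (with s shifted by one) concludes. *)

Section AppropriateFacts.

Variables (R : realFieldType) (m : nat) (c : nat -> R).
Hypothesis c_app : appropriate m c.

Lemma appropriate_sym i : (i <= m)%N -> c i = c (m - i)%N.
Proof.
case: c_app => c_sym _ le_im.
have [lt_2i_m | lt_m_2i | eq_2i_m] := ltngtP i.*2 m.
- exact: c_sym.
- by rewrite (c_sym (m - i)%N) ?subKn //; lia.
- by have -> : (m - i)%N = i by lia.
Qed.

Lemma appropriate_mono i k : (i <= k)%N -> (k <= m./2)%N -> c i <= c k.
Proof.
case: c_app => _ [_ c_incr]; elim: k => [|k IHk] le_ik le_k_half.
  by have -> : i = 0%N by lia.
have [-> // | ne_ik] := eqVneq i k.+1.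
by apply: le_trans (c_incr k _); [apply: IHk |]; lia.
Qed.

Lemma appropriate_le i j : (i <= j)%N -> (i + j <= m)%N -> c i <= c j.
Proof.
move=> le_ij le_sum; have [le_j_half | lt_half_j] := leqP j m./2.
  exact: appropriate_mono.
by rewrite (@appropriate_sym j); [apply: appropriate_mono |]; lia.
Qed.

End AppropriateFacts.

Lemma appropriate_inner (R : realFieldType) p (b : nat -> R) :
  appropriate p.+2 b -> appropriate p (fun i => b i.+1 - b 0%N).
Proof.
move=> b_app; have b_sym := appropriate_sym b_app.
case: b_app => _ [_ b_incr]; split; [|split].
- move=> i lt_2i_p /=; rewrite (b_sym i.+1); last lia.
  by have -> : (p.+2 - i.+1 = (p - i).+1)%N by lia.
- by rewrite subr_ge0; apply: b_incr; rewrite /=; lia.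
- by move=> i /= lt_i_half; rewrite lerD2r; apply: b_incr; lia.
Qed.

Section ShiftedCorrelation.

Variables (R : realFieldType) (q : nat) (a : nat -> R).
Hypothesis a_app : appropriate q a.

Lemma weighted_increments_ge0 p (b : nat -> R) s :
  appropriate p b -> (p + s.*2 < q)%N ->
  0 <= \sum_(0 <= i < p.+1) (a (i + s).+1 - a (i + s)) * b i.
Proof.
elim/ltn_ind: p b s => p IHp b s b_app lt_q.
have b0_ge0 : 0 <= b 0%N by case: b_app => _ [].
have -> : \sum_(0 <= i < p.+1) (a (i + s).+1 - a (i + s)) * b i =
    (a (p.+1 + s) - a s) * b 0%N +
    \sum_(0 <= i < p.+1) (a (i + s).+1 - a (i + s)) * (b i - b 0%N).
  have -> : a (p.+1 + s) - a s = \sum_(0 <= i < p.+1) (a (i + s).+1 - a (i + s)).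
    by rewrite -(@telescope_sumr _ 0 p.+1 (fun i => a (i + s)%N)).
  by rewrite mulr_suml -big_split; apply: eq_bigr => i _ /=; ring.
apply: addr_ge0.
  by rewrite mulr_ge0 // subr_ge0 (appropriate_le a_app) //; lia.
case: p IHp b_app lt_q => [|[|p]] IHp b_app lt_q.
- by rewrite big_nat1 subrr mulr0.
- rewrite big_nat_recr //= big_nat1 -(appropriate_sym b_app (i := 0)) //.
  by rewrite !subrr !mulr0 addr0.
rewrite big_nat_recl // big_nat_recr //= -(appropriate_sym b_app (i := 0)) //.
rewrite !subrr !mulr0 add0r addr0.
under eq_bigr => i _ do rewrite addSn -addnS.
apply: (IHp p _ _ s.+1 (appropriate_inner b_app)) => //; rewrite doubleS; lia.
Qed.

Variables (p : nat) (b : nat -> R).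
Hypothesis b_app : appropriate p b.

Definition shifted_corr s := \sum_(0 <= i < p.+1) a (i + s)%N * b i.

Lemma shifted_corr_le_succ s : (s.*2 < q - p)%N -> shifted_corr s <= shifted_corr s.+1.
Proof.
move=> lt_2s; rewrite -subr_ge0 /shifted_corr -sumrB.
under eq_bigr => i _ do rewrite addnS -mulrBl.
by apply: weighted_increments_ge0 => //; lia.
Qed.

Lemma shifted_corr_le_add s k :
  ((s + k).*2 <= (q - p).+1)%N -> shifted_corr s <= shifted_corr (s + k).
Proof.
elim: k => [|k IHk] le_q; first by rewrite addn0.
by apply: le_trans (IHk _) _; rewrite ?addnS; [| apply: shifted_corr_le_succ]; lia.
Qed.

Lemma shifted_corr_reflect s :
  (p <= q)%N -> (s <= q - p)%N -> shifted_corr s = shifted_corr (q - p - s).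
Proof.
move=> le_pq le_s; rewrite /shifted_corr big_nat_rev /=.
apply: eq_big_nat => i /andP[_ lt_ip].
rewrite add0n subSS (appropriate_sym b_app (i := p - i)); last lia.
rewrite (appropriate_sym a_app (i := p - i + s)); last lia.
by congr (a _ * b _); lia.
Qed.

End ShiftedCorrelation.

Theorem lemma3p4 (R : realFieldType) (p q : nat) (a b : nat -> R) (u v : nat) :
  (p.+1 < q)%N ->
  appropriate q a -> appropriate p b ->
  (u < v)%N -> (u + v <= q - p)%N ->
  \sum_(0 <= i < p.+1) a (i + u)%N * b i <= \sum_(0 <= i < p.+1) a (i + v)%N * b i.
Proof.
move=> lt_pq a_app b_app lt_uv le_uv.
have [le_2v | lt_2v] := leqP v.*2 (q - p).+1.
  by rewrite -(subnKC (ltnW lt_uv)); apply: (shifted_corr_le_add a_app b_app); lia.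
have [le_pq le_v] : (p <= q)%N /\ (v <= q - p)%N by split; lia.
rewrite -/(shifted_corr a p b u) -/(shifted_corr a p b v).
rewrite (shifted_corr_reflect a_app b_app le_pq le_v).
by rewrite -(@subnKC u (q - p - v)); [apply: (shifted_corr_le_add a_app b_app) |]; lia.
Qed.
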